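(* Let $4\le k\le\infty$. Suppose that a simplicial complex $X$ is obtained from two flag simplicial complexes $A$ and $B$ by gluing them along a simplex. Then $X$ is $k$-large if and only if both $A$ and $B$ are $k$-large.
   Context: A simplicial complex is flag if every set of pairwise adjacent vertices spans a simplex. A cycle in a complex is a subcomplex that is a subdivision of the circle; a subcomplex is full if every simplex of the ambient complex spanned by its vertices lies in it. For $4\le k\le\infty$, a flag simplicial complex is $k$-large if it has no full cycle of length $<k$. *)

From HB Require Import structures.
From mathcomp Require Import all_boot all_order.
From mathcomp Require Import finmap.
Set Implicit Arguments. Unset Strict Implicit. Unset Printing Implicit Defensive.
Local Open Scope fset_scope.

(* An (abstract) simplicial complex on the vertex type V is given by its set of
   simplices: nonempty finite subsets of V, closed under passing to nonempty
   subsets. *)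
Definition is_complex (V : choiceType) (X : {fset V} -> Prop) : Prop :=
  (forall s, X s -> s != fset0) /\
  (forall s t, X s -> t `<=` s -> t != fset0 -> X t).

Definition is_vertex (V : choiceType) (X : {fset V} -> Prop) (v : V) : Prop :=
  X [fset v].

Definition is_flag (V : choiceType) (X : {fset V} -> Prop) : Prop :=
  is_complex X /\
  forall s : {fset V}, s != fset0 ->
    (forall v, v \in s -> is_vertex X v) ->
    (forall u v, u \in s -> v \in s -> u != v -> X [fset u; v]) ->
    X s.

(* The cycle determined by a sequence c of n >= 3 distinct vertices
   v_0, ..., v_(n-1): the 1-dimensional complex (triangulated circle, n-gon)
   whose simplices are the vertices v_i and the edges {v_i, v_(i+1 mod n)}
   ([next c] is the cyclic successor in c).  Its length is n = size c. *)
Definition cycle_cx (V : choiceType) (c : seq V) : {fset V} -> Prop :=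
  fun s => (exists2 x, x \in c & s = [fset x]) \/
           (exists2 x, x \in c & s = [fset x; next c x]).

Definition full_cycle (V : choiceType) (X : {fset V} -> Prop) (c : seq V) : Prop :=
  [/\ uniq c, 3 <= size c,
      (forall s, cycle_cx c s -> X s) &
      (forall s, X s -> {subset s <= c} -> cycle_cx c s)].

(* Extended naturals {4,...,oo}: [Some k] is k, [None] is oo. *)
Definition lt_ext (n : nat) (k : option nat) : Prop :=
  if k is Some m then n < m else True.

Definition k_large (V : choiceType) (k : option nat) (X : {fset V} -> Prop) : Prop :=
  is_flag X /\ forall c, full_cycle X c -> ~ lt_ext (size c) k.

(* X is obtained from the complexes A and B (realised as subcomplexes on a common
   vertex type) by gluing them along a simplex sigma: X = A u B, sigma is a
   simplex of both A and B, and A, B share exactly the vertices of sigma. *)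
Definition glued_along_simplex (V : choiceType) (X A B : {fset V} -> Prop) : Prop :=
  (forall s, X s <-> A s \/ B s) /\
  exists sigma : {fset V},
    [/\ A sigma, B sigma &
        forall v, is_vertex A v -> is_vertex B v -> v \in sigma].

From HB Require Import structures.
From mathcomp Require Import all_boot all_order.
From mathcomp Require Import finmap.
From mathcomp Require Import boolp.
Set Implicit Arguments. Unset Strict Implicit. Unset Printing Implicit Defensive.
Local Open Scope fset_scope.

(* Since A and B share only vertices of sigma, a simplex of X all of whose
   vertices lie in A is a simplex of A.  Hence X is flag, and a full cycle of A
   (or of B) stays full in X.  Conversely, suppose a full cycle of X has a
   vertex outside A and a vertex outside B.  Going around it we find a vertex p
   entered from outside A and a vertex r entered from outside B; the entering
   edges lie in B and in A respectively, so p and r are shared, hence in sigma,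
   and p r is an edge of A.  Fullness makes it an edge of the cycle, so one of
   p, r is the predecessor of the other, contradicting how it was entered.
   Thus every full cycle of X is a full cycle of A or of B. *)

Lemma complex_vertex (V : choiceType) (X : {fset V} -> Prop) s v :
  is_complex X -> X s -> v \in s -> is_vertex X v.
Proof.
move=> [_ X_sub] Xs vs; apply: (X_sub s) => //; first by rewrite fsub1set.
by apply/fset0Pn; exists v; rewrite fset11.
Qed.

Lemma cycle_cx_sub (V : choiceType) (c : seq V) s :
  cycle_cx c s -> {subset s <= c}.
Proof.
by move=> [[x xc ->] v /fset1P -> | [x xc ->] v /fset2P [] ->]; rewrite ?mem_next.
Qed.

Lemma cycle_cx_pair (V : choiceType) (c : seq V) p r :
  cycle_cx c [fset p; r] -> p != r -> r = next c p \/ p = next c r.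
Proof.
have [pE rE] : p \in [fset p; r] /\ r \in [fset p; r].
  by split; apply/fset2P; [left | right].
move=> [[w _ E] | [w _ E]]; move: pE rE; rewrite E.
  by move=> /fset1P -> /fset1P ->; rewrite eqxx.
by move=> /fset2P [] -> /fset2P [] ->; rewrite ?eqxx //; [left | right].
Qed.

Lemma cycle_next_switch (T : eqType) (P : pred T) (c : seq T) x y :
  uniq c -> x \in c -> ~~ P x -> y \in c -> P y ->
  exists2 z, z \in c & ~~ P z && P (next c z).
Proof.
move=> Uc xc nPx yc Py; apply/hasP; apply: contraT; rewrite -all_predC.
move=> /allP /= noswitch.
pose e : rel T := fun u v => ~~ P u ==> ~~ P v.
have e_trans : transitive e.
  by move=> v u w /implyP uv /implyP vw; apply/implyP => /uv /vw.
have : cycle e c.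
  apply: (sub_in_cycle _ (allss c) (cycle_next Uc)) => u v uc _ /eqP <-.
  by apply/implyP => nPu; move: (noswitch u uc); rewrite nPu.
by rewrite cycle_all2rel // => /allrelP /(_ x y xc yc); rewrite /e nPx Py.
Qed.

Lemma glued_along_simplexC (V : choiceType) (X A B : {fset V} -> Prop) :
  glued_along_simplex X A B -> glued_along_simplex X B A.
Proof.
move=> [XE [sigma [As Bs shared]]]; split; first by move=> s; rewrite XE; tauto.
by exists sigma; split=> // v Bv Av; apply: shared.
Qed.

Section Gluing.

Variables (V : choiceType) (X A B : {fset V} -> Prop).
Hypotheses (complexA : is_complex A) (complexB : is_complex B)
  (gluedXAB : glued_along_simplex X A B).

Lemma glued_complex : is_complex X.
Proof.
case: gluedXAB complexA complexB => XE _ [neA subA] [neB subB]; split.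
  by move=> s /XE [/neA | /neB].
move=> s t /XE [As | Bs] ts t0; apply/XE.
  by left; apply: (subA s).
by right; apply: (subB s).
Qed.

Lemma glued_shared_simplex s :
  s != fset0 -> (forall v, v \in s -> is_vertex A v /\ is_vertex B v) -> A s.
Proof.
case: gluedXAB complexA => _ [sigma [As _ shared]] [_ subA] s0 s_shared.
apply: (subA sigma) => //; apply/fsubsetP => v /s_shared [Av Bv].
exact: shared.
Qed.

Lemma glued_simplexA s : B s -> (forall v, v \in s -> is_vertex A v) -> A s.
Proof.
move=> Bs s_A; apply: glued_shared_simplex.
  by case: complexB => neB _; apply: neB.
by move=> v vs; split; [apply: s_A | apply: (complex_vertex complexB Bs)].
Qed.

Lemma glued_vertex v : is_vertex X v -> is_vertex A v \/ is_vertex B v.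
Proof. by case: gluedXAB => XE _ /XE. Qed.

Lemma glued_edge_vertexB u v :
  X [fset u; v] -> ~ is_vertex A u -> is_vertex B v.
Proof.
case: gluedXAB => XE _ /XE [Auv | Buv] nAu.
  by case: nAu; apply: (complex_vertex complexA Auv); apply/fset2P; left.
by apply: (complex_vertex complexB Buv); apply/fset2P; right.
Qed.

Lemma glued_flag_cliqueA s :
  is_flag A -> s != fset0 -> (forall v, v \in s -> is_vertex A v) ->
  (forall u v, u \in s -> v \in s -> u != v -> X [fset u; v]) -> A s.
Proof.
case: gluedXAB => XE _ [_ flagA] s0 s_A s_adj; apply: flagA => // u v us vs uv.
case/XE: (s_adj u v us vs uv) => // Buv.
by apply: glued_simplexA => // w /fset2P [] ->; apply: s_A.
Qed.

Lemma glued_clique_vertexB (s : {fset V}) v0 :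
  v0 \in s -> ~ is_vertex A v0 -> (forall v, v \in s -> is_vertex X v) ->
  (forall u v, u \in s -> v \in s -> u != v -> X [fset u; v]) ->
  forall u, u \in s -> is_vertex B u.
Proof.
move=> v0s nAv0 s_X s_adj u us; have [-> | uv0] := eqVneq u v0.
  by case: (glued_vertex (s_X v0 v0s)).
by apply: (glued_edge_vertexB _ nAv0); apply: s_adj; rewrite // eq_sym.
Qed.

Lemma full_cycle_gluedA c : full_cycle A c -> full_cycle X c.
Proof.
case: gluedXAB => XE _ [Uc c3 c_in c_full]; split=> // s.
  by move=> /c_in As; apply/XE; left.
move=> /XE [As | Bs] sc; apply: c_full => //; apply: glued_simplexA => // v vs.
by apply: c_in; left; exists v => //; apply: sc.
Qed.

Lemma full_cycle_of_gluedA c :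
  full_cycle X c -> (forall x, x \in c -> is_vertex A x) -> full_cycle A c.
Proof.
case: gluedXAB => XE _ [Uc c3 c_in c_full] c_A; split=> // s.
  move=> cs; case/XE: (c_in s cs) => // Bs; apply: glued_simplexA => // v vs.
  by apply: c_A; apply: (cycle_cx_sub cs).
by move=> As; apply: c_full; apply/XE; left.
Qed.

End Gluing.

Lemma glued_flag (V : choiceType) (X A B : {fset V} -> Prop) :
  is_flag A -> is_flag B -> glued_along_simplex X A B -> is_flag X.
Proof.
move=> flagA flagB G; have G' := glued_along_simplexC G.
have [cA cB] := (flagA.1, flagB.1); split; first exact: (glued_complex cA cB G).
case: (G) => XE _ s s0 s_X s_adj; apply/XE.
have [[v0 [v0s nAv0]] | all_A] := pselect (exists v, v \in s /\ ~ is_vertex A v).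
  right; apply: (glued_flag_cliqueA cB cA G' flagB) => //.
  exact: (glued_clique_vertexB cA cB G v0s nAv0).
left; apply: (glued_flag_cliqueA cA cB G flagA) => // u us.
by apply: contrapT => nAu; apply: all_A; exists u.
Qed.

Lemma glued_full_cycle_side (V : choiceType) (X A B : {fset V} -> Prop) c :
  is_complex A -> is_complex B -> glued_along_simplex X A B -> full_cycle X c ->
  (forall x, x \in c -> is_vertex A x) \/ (forall x, x \in c -> is_vertex B x).
Proof.
move=> cA cB G fc; have G' := glued_along_simplexC G.
have [Uc _ c_in c_full] := fc; case: (G) => XE _.
have c_X v : v \in c -> is_vertex X v by move=> vc; apply: c_in; left; exists v.
have c_edge v : v \in c -> X [fset v; next c v].
  by move=> vc; apply: c_in; right; exists v.
pose inA v := `[< is_vertex A v >]; pose inB v := `[< is_vertex B v >].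
have [/allP all_A | /allPn [x xc nAx]] := boolP (all inA c).
  by left=> v /all_A /asboolP.
have [/allP all_B | /allPn [y yc nBy]] := boolP (all inB c).
  by right=> v /all_B /asboolP.
have next_inj : injective (next c) := can_inj (prev_next Uc).
have Ay : inA y.
  apply/asboolP; case: (glued_vertex G (c_X y yc)) => // By.
  by case/negP: nBy; apply/asboolP.
have Bx : inB x.
  apply/asboolP; case: (glued_vertex G (c_X x xc)) => // Ax.
  by case/negP: nAx; apply/asboolP.
have [z zc /andP [/asboolPn nAz /asboolP Ap]] := cycle_next_switch Uc xc nAx yc Ay.
have [z' z'c /andP [/asboolPn nBz' /asboolP Br]] :=
  cycle_next_switch Uc yc nBy xc Bx.
set p := next c z in Ap; set r := next c z' in Br.
have Bp : is_vertex B p := glued_edge_vertexB cA cB G (c_edge z zc) nAz.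
have Ar : is_vertex A r := glued_edge_vertexB cB cA G' (c_edge z' z'c) nBz'.
have pr : p != r.
  apply/eqP => /next_inj zz'; rewrite -zz' in nBz'.
  by case: (glued_vertex G (c_X z zc)).
have Apr : A [fset p; r].
  apply: (glued_shared_simplex cA G) => [|v /fset2P [] -> //].
  by apply/fset0Pn; exists p; rewrite fset21.
have pr_c : {subset [fset p; r] <= c} by move=> v /fset2P [] ->; rewrite mem_next.
have [rp | pr'] := cycle_cx_pair (c_full _ (proj2 (XE _) (or_introl Apr)) pr_c) pr.
  by move/next_inj: rp => z'p; rewrite z'p in nBz'.
by move/next_inj: pr' => zr; rewrite zr in nAz.
Qed.

Lemma k_large_gluedA (V : choiceType) k (X A B : {fset V} -> Prop) :
  is_flag A -> is_complex B -> glued_along_simplex X A B ->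
  k_large k X -> k_large k A.
Proof.
move=> flagA cB G [_ noX]; split=> // c /(full_cycle_gluedA flagA.1 cB G).
exact: noX.
Qed.

Lemma k_large_glued (V : choiceType) k (X A B : {fset V} -> Prop) :
  is_flag A -> is_flag B -> glued_along_simplex X A B ->
  k_large k A -> k_large k B -> k_large k X.
Proof.
move=> flagA flagB G [_ noA] [_ noB]; split; first exact: (glued_flag flagA flagB G).
have [cA cB] := (flagA.1, flagB.1).
move=> c fc; case: (glued_full_cycle_side cA cB G fc) => c_side.
  exact: noA (full_cycle_of_gluedA cA cB G fc c_side).
exact: noB (full_cycle_of_gluedA cB cA (glued_along_simplexC G) fc c_side).
Qed.

Theorem lemma2p3 (V : choiceType) (k : option nat)
    (X A B : {fset V} -> Prop) :
  (if k is Some m then 4 <= m else true) ->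
  is_flag A -> is_flag B ->
  glued_along_simplex X A B ->
  (k_large k X <-> k_large k A /\ k_large k B).
Proof.
move=> _ flagA flagB G; split; last by case; exact: k_large_glued flagA flagB G.
move=> kX; split; first exact: (k_large_gluedA flagA flagB.1 G).
exact: (k_large_gluedA flagB flagA.1 (glued_along_simplexC G)).
Qed.
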